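(* Let $\mathbb{X},\mathbb{Y},\mathbb{Z}$ be finite-dimensional real Euclidean spaces, $f_1:\mathbb{Y}\to(-\infty,+\infty]$ and $f_2:\mathbb{Z}\to(-\infty,+\infty]$ proper closed convex functions, $B_1:\mathbb{Y}\to\mathbb{X}$, $B_2:\mathbb{Z}\to\mathbb{X}$ linear, $c\in\mathbb{X}$, $\sigma>0$, and consider the problem $\min\{f_1(y)+f_2(z): B_1y+B_2z=c\}$ with augmented Lagrangian $L_\sigma(y,z;x)=f_1(y)+f_2(z)+\langle x,B_1y+B_2z-c\rangle+\frac{\sigma}{2}\|B_1y+B_2z-c\|^2$. Assume $\partial f_1+\sigma B_1^*B_1$ and $\partial f_2+\sigma B_2^*B_2$ are maximal and strongly monotone. Let $(y^0,z^0,x^0)\in\operatorname{dom}f_1\times\operatorname{dom}f_2\times\mathbb{X}$. Algorithm I (HPR without proximal terms): set $\tilde x^0=x^0$ and for $k\ge0$: $z^{k+1}=\arg\min_z L_\sigma(y^k,z;\tilde x^k)$; $x^{k+1/2}=\tilde x^k+\sigma(B_1y^k+B_2z^{k+1}-c)$; $y^{k+1}=\arg\min_y L_\sigma(y,z^{k+1};x^{k+1/2})$; $x^{k+1}=x^{k+1/2}+\sigma(B_1y^{k+1}+B_2z^{k+1}-c)$; $\tilde x^{k+1}=\frac{1}{k+2}\tilde x^0+\frac{k+1}{k+2}x^{k+1}+\frac{\sigma}{k+2}(B_1y^0-B_1y^{k+1})$. Algorithm II (Halpern accelerated pADMM without proximal terms): with $w^0=(y^0,z^0,x^0)$ and for $k\ge0$: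 $\bar z^{k+1}=\arg\min_z L_\sigma(y^k,z;x^k)$; $\bar x^{k+1}=x^k+\sigma(B_1y^k+B_2\bar z^{k+1}-c)$; $\bar y^{k+1}=\arg\min_y L_\sigma(y,\bar z^{k+1};\bar x^{k+1})$; $\hat w^{k+1}=2\bar w^{k+1}-w^k$; $w^{k+1}=\frac{1}{k+2}w^0+\frac{k+1}{k+2}\hat w^{k+1}$, where $w^k=(y^k,z^k,x^k)$ and $\bar w^{k+1}=(\bar y^{k+1},\bar z^{k+1},\bar x^{k+1})$. Then all subproblems in both algorithms have unique solutions, and for every $k\ge0$, $(y^{k+1},z^{k+1},x^{k+1/2})$ (from Algorithm I) equals $(\bar y^{k+1},\bar z^{k+1},\bar x^{k+1})$ (from Algorithm II), both started from the same $(y^0,x^0)$. *)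

(* real Euclidean spaces are row vectors 'rV[R]_n over R : realType,
   extended-real-valued functions take values in \bar R (constructive_ereal). *)
From HB Require Import structures.
From mathcomp Require Import all_boot all_order all_algebra.
From mathcomp Require Import reals constructive_ereal.

Set Implicit Arguments.
Unset Strict Implicit.
Unset Printing Implicit Defensive.

Import Order.TTheory GRing.Theory Num.Theory.

Local Open Scope ring_scope.

Section Defs.
Variable R : realType.

Definition dotv (n : nat) (u v : 'rV[R]_n) : R := (u *m v^T) 0 0.
Definition sqnorm (n : nat) (u : 'rV[R]_n) : R := dotv u u.

Definition eproper (n : nat) (f : 'rV[R]_n -> \bar R) : Prop :=
  (forall x, f x != -oo%E) /\ exists x, f x \is a fin_num.

(* convex: the epigraph is convex *)
Definition econvex (n : nat) (f : 'rV[R]_n -> \bar R) : Prop :=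
  forall (x y : 'rV[R]_n) (t a b : R), 0 <= t <= 1 ->
    (f x <= a%:E)%E -> (f y <= b%:E)%E ->
    (f (t *: x + (1 - t) *: y)%R <= (t * a + (1 - t) * b)%:E)%E.

(* closed: lower semicontinuous everywhere *)
Definition eclosed (n : nat) (f : 'rV[R]_n -> \bar R) : Prop :=
  forall (x : 'rV[R]_n) (a : R), (a%:E < f x)%E ->
    exists2 e : R, 0 < e & forall y, sqnorm (y - x) < e -> (a%:E < f y)%E.

Definition proper_closed_convex (n : nat) (f : 'rV[R]_n -> \bar R) : Prop :=
  [/\ eproper f, eclosed f & econvex f].

Definition in_dom (n : nat) (f : 'rV[R]_n -> \bar R) (x : 'rV[R]_n) : Prop :=
  (f x < +oo)%E.

Definition subdiff (n : nat) (f : 'rV[R]_n -> \bar R) (x v : 'rV[R]_n) : Prop :=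
  f x \is a fin_num /\ forall y, (f x + (dotv v (y - x))%:E <= f y)%E.

(* A linear map B : R^n -> R^m is a matrix acting on rows: y |-> y *m B;
   its adjoint is x |-> x *m B^T.
   The set-valued operator  \partial f + sigma B^* B  (graph as a relation). *)
Definition subdiff_plus (n m : nat) (f : 'rV[R]_n -> \bar R) (sigma : R)
  (B : 'M[R]_(n, m)) (x u : 'rV[R]_n) : Prop :=
  exists2 v, subdiff f x v & u = v + sigma *: (x *m B *m B^T).

Definition monotone_op (n : nat) (T : 'rV[R]_n -> 'rV[R]_n -> Prop) : Prop :=
  forall x x' u u', T x u -> T x' u' -> 0 <= dotv (u - u') (x - x').

Definition maximal_monotone (n : nat) (T : 'rV[R]_n -> 'rV[R]_n -> Prop) : Prop :=
  monotone_op T /\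
  forall x u, (forall x' u', T x' u' -> 0 <= dotv (u - u') (x - x')) -> T x u.

Definition strongly_monotone (n : nat) (T : 'rV[R]_n -> 'rV[R]_n -> Prop) : Prop :=
  exists2 mu : R, 0 < mu & forall x x' u u', T x u -> T x' u' ->
    mu * sqnorm (x - x') <= dotv (u - u') (x - x').

Definition augL (nx ny nz : nat) (f1 : 'rV[R]_ny -> \bar R) (f2 : 'rV[R]_nz -> \bar R)
  (B1 : 'M[R]_(ny, nx)) (B2 : 'M[R]_(nz, nx)) (c : 'rV[R]_nx) (sigma : R)
  (y : 'rV[R]_ny) (z : 'rV[R]_nz) (x : 'rV[R]_nx) : \bar R :=
  (f1 y + f2 z + (dotv x (y *m B1 + z *m B2 - c)
                 + sigma / 2 * sqnorm (y *m B1 + z *m B2 - c))%:E)%E.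

(* z-subproblem objective: L_sigma(y,.;x) with the z-independent term f1(y)
   dropped (so that it is meaningful even if y \notin dom f1). *)
Definition zsub (nx ny nz : nat) (f2 : 'rV[R]_nz -> \bar R)
  (B1 : 'M[R]_(ny, nx)) (B2 : 'M[R]_(nz, nx)) (c : 'rV[R]_nx) (sigma : R)
  (y : 'rV[R]_ny) (x : 'rV[R]_nx) (z : 'rV[R]_nz) : \bar R :=
  (f2 z + (dotv x (y *m B1 + z *m B2 - c)
           + sigma / 2 * sqnorm (y *m B1 + z *m B2 - c))%:E)%E.

(* y-subproblem objective: L_sigma(.,z;x) with the y-independent term f2(z) dropped. *)
Definition ysub (nx ny nz : nat) (f1 : 'rV[R]_ny -> \bar R)
  (B1 : 'M[R]_(ny, nx)) (B2 : 'M[R]_(nz, nx)) (c : 'rV[R]_nx) (sigma : R)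
  (z : 'rV[R]_nz) (x : 'rV[R]_nx) (y : 'rV[R]_ny) : \bar R :=
  (f1 y + (dotv x (y *m B1 + z *m B2 - c)
           + sigma / 2 * sqnorm (y *m B1 + z *m B2 - c))%:E)%E.

Definition is_argmin (T : Type) (g : T -> \bar R) (t : T) : Prop :=
  forall t', (g t <= g t')%E.

End Defs.

From HB Require Import structures.
From mathcomp Require Import all_boot all_order all_algebra.
From mathcomp Require Import boolp classical_sets reals constructive_ereal.
From mathcomp Require Import ring lra.

(* Each subproblem minimises f + <x, . *m B + e> + sigma/2 |. *m B + e|^2 over one
   block, e being the residual contributed by the other block. Its minimisers are
   the solutions of -(x + sigma e) B^T in (subdiff f + sigma B B^T), so they exist
   because a maximal strongly monotone operator is onto, and they are unique by
   strong monotonicity. Surjectivity is obtained by Tikhonov regularisation: adding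
   lam/2 |. - z1|^2 makes the objective strongly convex, hence it has a minimiser
   z_lam (closedness of f and completeness); by strong monotonicity the z_lam form
   a Cauchy family as lam -> 0, and maximality puts their limit in the graph.
   The minimiser depends on (x, e) only through x + sigma e. Along the two
   algorithms the quantities xt^k + sigma y^k B1 and xw^k + sigma yw^k B1 coincide
   (an identity of the Halpern averaging weights, by induction on k), so both
   z-steps, and then both y-steps, solve the same subproblems. *)

Import Order.TTheory GRing.Theory Num.Theory.

Set Implicit Arguments.
Unset Strict Implicit.
Unset Printing Implicit Defensive.

Local Open Scope ring_scope.

Section Euclidean.
Variables (R : realType) (n : nat).
Implicit Types (u v w : 'rV[R]_n) (a t : R).

Lemma dotvE u v : dotv u v = \sum_i u 0 i * v 0 i.
Proof. by rewrite /dotv !mxE; apply: eq_bigr => i _; rewrite mxE. Qed.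

Lemma dotvC u v : dotv u v = dotv v u.
Proof. by rewrite /dotv -[u *m _]trmxK trmx_mul trmxK [in LHS]mxE. Qed.

Lemma dotvDl u v w : dotv (u + v) w = dotv u w + dotv v w.
Proof. by rewrite /dotv mulmxDl mxE. Qed.

Lemma dotvDr u v w : dotv w (u + v) = dotv w u + dotv w v.
Proof. by rewrite !(dotvC w) dotvDl. Qed.

Lemma dotvZl a u v : dotv (a *: u) v = a * dotv u v.
Proof. by rewrite /dotv -scalemxAl mxE. Qed.

Lemma dotvZr a u v : dotv v (a *: u) = a * dotv v u.
Proof. by rewrite !(dotvC v) dotvZl. Qed.

Lemma dotvNl u v : dotv (- u) v = - dotv u v.
Proof. by rewrite -scaleN1r dotvZl mulN1r. Qed.

Lemma dotvNr u v : dotv v (- u) = - dotv v u.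
Proof. by rewrite !(dotvC v) dotvNl. Qed.

Lemma dotvBl u v w : dotv (u - v) w = dotv u w - dotv v w.
Proof. by rewrite dotvDl dotvNl. Qed.

Lemma dotvBr u v w : dotv w (u - v) = dotv w u - dotv w v.
Proof. by rewrite dotvDr dotvNr. Qed.

Lemma dotv0l u : dotv 0 u = 0.
Proof. by rewrite /dotv mul0mx mxE. Qed.

Lemma sqnorm_ge0 u : 0 <= sqnorm u.
Proof. by rewrite /sqnorm dotvE; apply: sumr_ge0 => i _; exact: sqr_ge0. Qed.

Lemma sqnorm_eq0 u : (sqnorm u == 0) = (u == 0).
Proof.
apply/idP/eqP => [|->]; last by rewrite /sqnorm dotv0l.
rewrite /sqnorm dotvE psumr_eq0 => [/allP u0|i _]; last exact: sqr_ge0.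
apply/rowP => i; have /u0 /= := mem_index_enum i.
by rewrite mulf_eq0 orbb mxE => /eqP.
Qed.

Lemma sqnorm_coord u i : u 0 i ^+ 2 <= sqnorm u.
Proof.
rewrite /sqnorm dotvE (bigD1 i) //= expr2 lerDl.
by apply: sumr_ge0 => j _; exact: sqr_ge0.
Qed.

Lemma sqnormD u v : sqnorm (u + v) = sqnorm u + 2 * dotv u v + sqnorm v.
Proof. rewrite /sqnorm !dotvDl !dotvDr (dotvC v u); ring. Qed.

Lemma sqnormZ a u : sqnorm (a *: u) = a ^+ 2 * sqnorm u.
Proof. rewrite /sqnorm dotvZl dotvZr; ring. Qed.

Lemma sqnormN u : sqnorm (- u) = sqnorm u.
Proof. by rewrite /sqnorm dotvNl dotvNr opprK. Qed.

Lemma sqnormB u v : sqnorm (u - v) = sqnorm (v - u).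
Proof. by rewrite -sqnormN opprB. Qed.

Lemma dotv_ge u v t : 0 < t -> - ((t * sqnorm u + sqnorm v / t) / 2) <= dotv u v.
Proof.
move=> t0; have := sqnorm_ge0 (t *: u + v).
rewrite sqnormD sqnormZ dotvZl => H.
have -> : - ((t * sqnorm u + sqnorm v / t) / 2) =
   dotv u v - (t ^+ 2 * sqnorm u + 2 * (t * dotv u v) + sqnorm v) / (2 * t).
  by field; rewrite gt_eqF.
by rewrite lerBlDr lerDl divr_ge0 // mulr_ge0 // ltW.
Qed.

Lemma dotv_le u v t : 0 < t -> dotv u v <= (t * sqnorm u + sqnorm v / t) / 2.
Proof. by move=> t0; have := dotv_ge (- u) v t0; rewrite sqnormN dotvNl lerN2. Qed.

Lemma sqnormD_le u v : sqnorm (u + v) <= 2 * sqnorm u + 2 * sqnorm v.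
Proof.
by rewrite sqnormD; have := dotv_le u v (@ltr01 R); rewrite !mul1r divr1; lra.
Qed.

End Euclidean.

Lemma dotv_mulmx (R : realType) (n m : nat) (u : 'rV[R]_n) (M : 'M[R]_(n, m)) v :
  dotv (u *m M) v = dotv u (v *m M^T).
Proof. by rewrite /dotv trmx_mul trmxK mulmxA. Qed.

Section Completeness.
Variable R : realType.

Definition sq_cauchy (n : nat) (s : nat -> 'rV[R]_n) : Prop :=
  forall e : R, 0 < e -> exists N, forall i j, (N <= i)%N -> (N <= j)%N ->
    sqnorm (s i - s j) < e.

Definition sq_limit (n : nat) (s : nat -> 'rV[R]_n) (l : 'rV[R]_n) : Prop :=
  forall e : R, 0 < e -> exists N, forall i, (N <= i)%N -> sqnorm (s i - l) < e.

Lemma real_cauchy_complete (r : nat -> R) :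
  (forall e : R, 0 < e -> exists N, forall i j, (N <= i)%N -> (N <= j)%N ->
      r i - r j < e) ->
  exists L, forall e : R, 0 < e -> exists N, forall i, (N <= i)%N -> `|r i - L| < e.
Proof.
move=> Hc; pose E : set R := fun x => exists N, forall i, (N <= i)%N -> x <= r i.
have ubE N e : (forall i j, (N <= i)%N -> (N <= j)%N -> r i - r j < e) ->
    ubound E (r N + e).
  move=> HN x [N' HN']; have := HN' (maxn N N') (leq_maxr _ _).
  by have := HN (maxn N N') N (leq_maxl _ _) (leqnn _); lra.
have [N1 HN1] := Hc 1 ltr01.
have E0 : E (r N1 - 1).
  by exists N1 => i Hi; have := HN1 N1 i (leqnn _) Hi; lra.
exists (sup E) => e e0; have [N HN] := Hc _ (divr_gt0 e0 (@ltr0Sn R 1)).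
exists N => i Hi; rewrite ltr_norml.
have h1 : r N - e / 2 <= sup E.
  apply: ub_le_sup; first by exists (r N1 + 1); exact: ubE.
  by exists N => j Hj; have := HN N j (leqnn _) Hj; lra.
have h2 : sup E <= r N + e / 2 by apply: ge_sup; [exists (r N1 - 1) | exact: ubE].
by have := HN i N Hi (leqnn _); have := HN N i (leqnn _) Hi; lra.
Qed.

Lemma sq_cauchy_limit (n : nat) (s : nat -> 'rV[R]_n) :
  sq_cauchy s -> exists l, sq_limit s l.
Proof.
move=> Hc.
have Hi (i : 'I_n) : exists L, forall e : R, 0 < e -> exists N, forall m, (N <= m)%N ->
    `|s m 0 i - L| < e.
  apply: real_cauchy_complete => e e0; have [N HN] := Hc _ (exprn_gt0 2 e0).
  exists N => m k Hm Hk; have := sqnorm_coord (s m - s k) i.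
  by rewrite !mxE; have := HN m k Hm Hk; nra.
pose L i := sval (cid (Hi i)).
exists (\row_i L i) => e e0.
pose eta := Num.sqrt (e / n.+1%:R).
have eta0 : 0 < eta by rewrite sqrtr_gt0 divr_gt0.
have HN i := cid (svalP (cid (Hi i)) eta eta0).
exists (\max_i sval (HN i)) => m Hm.
apply: (@le_lt_trans _ _ (\sum_(i < n) e / n.+1%:R)).
  rewrite /sqnorm dotvE; apply: ler_sum => i _; rewrite !mxE -expr2.
  have := svalP (HN i) m (leq_trans (leq_bigmax i) Hm).
  have := sqr_sqrtr (ltW (divr_gt0 e0 (ltr0Sn R n))); rewrite -/eta => <-.
  rewrite -[X in X <= _]real_normK ?num_real //.
  by have := normr_ge0 (s m 0 i - L i); nra.
rewrite sumr_const card_ord -[_ *+ n]mulr_natr mulrAC ltr_pdivrMr ?ltr0n //.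
by rewrite ltr_pM2l // ltr_nat.
Qed.

End Completeness.

Lemma inv_succ_gt0 (R : realType) (N : nat) : 0 < N.+1%:R^-1 :> R.
Proof. by rewrite invr_gt0 ltr0Sn. Qed.

Lemma inv_succ_lt (R : realType) (e : R) : 0 < e ->
  exists K, forall N, (K <= N)%N -> N.+1%:R^-1 < e.
Proof.
move=> e0; have [K hK] := ltr_add_invr e0; rewrite add0r in hK.
exists K => N hN; apply: le_lt_trans hK.
by rewrite lef_pV2 ?posrE ?ltr0n // ler_nat.
Qed.

Lemma ge0_small_step (R : realType) (a q : R) : 0 <= q ->
  (forall t : R, 0 < t -> t <= 1 -> 0 <= t * a + t ^+ 2 * q) -> 0 <= a.
Proof.
move=> q0 H; rewrite leNgt; apply/negP => a0.
pose t := Num.min 1 (- a / (q + 1)).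
have t0 : 0 < t by rewrite lt_min ltr01 divr_gt0 // ?oppr_gt0 //; lra.
have t1 : t <= 1 by rewrite ge_min lexx.
have t2 : t * (q + 1) <= - a by rewrite -ler_pdivlMr ?ge_min ?lexx ?orbT //; lra.
by have := H t t0 t1; move: t0 t1 t2; clearbody t => t0 t1 t2; nra.
Qed.

Lemma sqnorm_le_dotv (R : realType) (n : nat) (mu : R) (c d : 'rV[R]_n) :
  0 < mu -> mu * sqnorm d <= dotv c d -> sqnorm d <= sqnorm c / mu ^+ 2.
Proof.
move=> mu0 h; have mi0 : 0 < mu^-1 by rewrite invr_gt0.
have := dotv_le c d mi0; rewrite invrK => h2.
have h3 : mu * (mu * sqnorm d) <= mu * (mu^-1 * sqnorm c) by rewrite ler_pM2l //; lra.
by rewrite ler_pdivlMr ?exprn_gt0 // mulrC expr2 -mulrA; rewrite mulVKf ?gt_eqF in h3.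
Qed.

Lemma maximal_monotone_nonempty (R : realType) (n : nat)
  (T : 'rV[R]_n -> 'rV[R]_n -> Prop) :
  maximal_monotone T -> exists z u, T z u.
Proof.
move=> [_ Tmax]; apply: contrapT => T0; apply: (T0); exists 0, 0.
by apply: Tmax => z u Tzu; exfalso; apply: T0; exists z, u.
Qed.

Section Tikhonov.
Variables (R : realType) (n : nat) (T : 'rV[R]_n -> 'rV[R]_n -> Prop) (mu : R).
Hypotheses (T_max : maximal_monotone T) (mu_gt0 : 0 < mu)
  (T_strong : forall x x' u u', T x u -> T x' u' ->
     mu * sqnorm (x - x') <= dotv (u - u') (x - x')).
Variables (u u1 z1 : 'rV[R]_n) (zs : nat -> 'rV[R]_n).
Hypotheses (T_z1 : T z1 u1)
  (T_zs : forall N, T (zs N) (u - N.+1%:R^-1 *: (zs N - z1))).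

Let D := sqnorm (u - u1) / mu ^+ 2.

Lemma tikhonov_bounded N : sqnorm (zs N - z1) <= D.
Proof.
apply: (sqnorm_le_dotv mu_gt0); have h := T_strong (T_zs N) T_z1.
rewrite addrAC dotvBl dotvZl in h; have := sqnorm_ge0 (zs N - z1); rewrite /sqnorm in h *.
have := inv_succ_gt0 R N.
by move: (N.+1%:R^-1) h => lam; nra.
Qed.

Lemma tikhonov_cauchy : sq_cauchy zs.
Proof.
have D0 : 0 <= D by rewrite divr_ge0 ?sqnorm_ge0 // exprn_ge0 // ltW.
have close N i j : (N <= i)%N -> (N <= j)%N ->
    sqnorm (zs i - zs j) <= 4 * N.+1%:R^-1 * D / mu ^+ 2.
  move=> Ni Nj.
  have lam_sq k : (N <= k)%N -> k.+1%:R^-1 ^+ 2 <= N.+1%:R^-1 :> R.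
    move=> Nk; have k0 : 0 <= k.+1%:R^-1 :> R by rewrite invr_ge0 ler0n.
    have k1 : k.+1%:R^-1 <= 1 :> R by rewrite invf_le1 ?ltr0Sn // ler1n.
    have kN : k.+1%:R^-1 <= N.+1%:R^-1 :> R.
      by rewrite lef_pV2 ?posrE ?ltr0n // ler_nat.
    by move: (k.+1%:R^-1 : R) (N.+1%:R^-1 : R) k0 k1 kN => a b; nra.
  have h := T_strong (T_zs i) (T_zs j).
  rewrite opprD opprK addrACA subrr add0r addrC in h.
  apply: le_trans (sqnorm_le_dotv mu_gt0 h) _.
  rewrite ler_pM2r ?invr_gt0 ?exprn_gt0 //.
  apply: le_trans (sqnormD_le _ _) _; rewrite sqnormN !sqnormZ.
  have := tikhonov_bounded i; have := tikhonov_bounded j.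
  have := sqnorm_ge0 (zs i - z1); have := sqnorm_ge0 (zs j - z1).
  have := lam_sq i Ni; have := lam_sq j Nj.
  have : 0 <= N.+1%:R^-1 :> R by rewrite invr_ge0 ler0n.
  move: (i.+1%:R^-1 ^+ 2) (j.+1%:R^-1 ^+ 2) (N.+1%:R^-1 : R) D => qi qj lN d.
  move: (sqnorm (zs j - z1)) (sqnorm (zs i - z1)) => sj si; nra.
move=> e e0; have D1 : 0 < 4 * D + 1 by lra.
have [N HN] := inv_succ_lt (divr_gt0 (mulr_gt0 e0 (exprn_gt0 2 mu_gt0)) D1).
exists N => i j Ni Nj; apply: le_lt_trans (close N i j Ni Nj) _.
rewrite ltr_pdivrMr ?exprn_gt0 //; have := HN N (leqnn _).
rewrite ltr_pdivlMr // => hN.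
have := inv_succ_gt0 R N.
by move: (N.+1%:R^-1 : R) hN => lN; nra.
Qed.

Lemma tikhonov_limit l : sq_limit zs l -> T l u.
Proof.
move=> zs_l; apply: T_max.2 => z' u' T_z'; apply/ler_addgt0Pl => e e0.
set c := u - u'; set E := sqnorm (z1 - z').
have c1 : 0 < 2 * (sqnorm c + 1) by have := sqnorm_ge0 c; lra.
pose t := e / (2 * (sqnorm c + 1)).
have t0 : 0 < t by rewrite divr_gt0.
have tc : t * sqnorm c <= e / 2.
  rewrite /t mulrAC ler_pdivrMr // -subr_ge0.
  have -> : e / 2 * (2 * (sqnorm c + 1)) - e * sqnorm c = e by field.
  exact: ltW.
have [N1 HN1] := zs_l _ (divr_gt0 (mulr_gt0 t0 e0) (@ltr0Sn R 1)).
have D0 : 0 <= D by rewrite divr_ge0 ?sqnorm_ge0 // exprn_ge0 // ltW.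
have DE : 0 < 3 * D + 2 * E + 1 by have := sqnorm_ge0 (z1 - z'); rewrite -/E; lra.
have [N2 HN2] := inv_succ_lt (divr_gt0 e0 DE).
pose N := maxn N1 N2; pose lN : R := N.+1%:R^-1.
have mono := T_max.1 _ _ _ _ (T_zs N) T_z'; rewrite -/lN in mono.
rewrite addrAC dotvBl dotvZl in mono.
have near_l : sqnorm (l - zs N) / t < e / 2.
  by rewrite ltr_pdivrMr // sqnormB mulrC mulrA HN1 // leq_maxl.
have bound_z' : sqnorm (zs N - z') <= 2 * D + 2 * E.
  have := sqnormD_le (zs N - z1) (z1 - z'); rewrite addrA subrK.
  by have := tikhonov_bounded N; rewrite -/E; lra.
have lb1 := dotv_ge (zs N - z1) (zs N - z') ltr01; rewrite mul1r divr1 in lb1.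
have lb2 := dotv_ge c (l - zs N) t0.
have -> : l - z' = (zs N - z') + (l - zs N) by rewrite [RHS]addrC addrA subrK.
rewrite dotvDr.
have := HN2 N (leq_maxr _ _); rewrite -/lN ltr_pdivlMr // => small_lN.
have lN0 : 0 < lN := inv_succ_gt0 R N.
have := tikhonov_bounded N.
move: (dotv c (zs N - z')) (dotv c (l - zs N)) (dotv (zs N - z1) (zs N - z')) mono lb1 lb2.
move: (sqnorm (zs N - z1)) (sqnorm (zs N - z')) (sqnorm (l - zs N) / t) near_l bound_z'.
by move=> S1 S2 S3 ? ? P Q W ? ? ? ?; nra.
Qed.

End Tikhonov.

Lemma maximal_strongly_monotone_surj (R : realType) (n : nat)
  (T : 'rV[R]_n -> 'rV[R]_n -> Prop) :
  maximal_monotone T -> strongly_monotone T ->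
  (forall (lam : R) w u, 0 < lam -> exists z, T z (u - lam *: (z - w))) ->
  forall u, exists z, T z u.
Proof.
move=> T_max [mu mu0 T_strong] T_reg u.
have [z1 [u1 T_z1]] := maximal_monotone_nonempty T_max.
have T_reg1 N : exists z, T z (u - N.+1%:R^-1 *: (z - z1)).
  exact/T_reg/inv_succ_gt0.
pose zs N := sval (cid (T_reg1 N)).
have T_zs N : T (zs N) (u - N.+1%:R^-1 *: (zs N - z1)) := svalP (cid (T_reg1 N)).
have [l zs_l] := sq_cauchy_limit (tikhonov_cauchy mu0 T_strong T_z1 T_zs).
by exists l; exact: (tikhonov_limit T_max mu0 T_strong T_z1 T_zs zs_l).
Qed.

Section RegularisedSubproblem.
Variables (R : realType) (n m : nat) (f : 'rV[R]_n -> \bar R) (sigma : R)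
  (B : 'M[R]_(n, m)).
Hypotheses (sigma_gt0 : 0 < sigma) (f_pcc : proper_closed_convex f)
  (T_max : maximal_monotone (subdiff_plus f sigma B))
  (T_strong : strongly_monotone (subdiff_plus f sigma B)).
Implicit Types (p w z d l y : 'rV[R]_n) (lam t : R).

Definition phi p lam w z : R :=
  sigma / 2 * sqnorm (z *m B) + dotv z p + lam / 2 * sqnorm (z - w).

Definition phi_grad p lam w z : 'rV[R]_n :=
  p + sigma *: (z *m B *m B^T) + lam *: (z - w).

Definition curv lam d : R := sigma / 2 * sqnorm (d *m B) + lam / 2 * sqnorm d.

Definition obj p lam w z : \bar R := (f z + (phi p lam w z)%:E)%E.

Lemma phi_shift p lam w z d :
  phi p lam w (z + d) = phi p lam w z + dotv (phi_grad p lam w z) d + curv lam d.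
Proof.
rewrite /phi /phi_grad /curv mulmxDl (_ : z + d - w = (z - w) + d); last by rewrite addrAC.
rewrite (sqnormD (z *m B)) (sqnormD (z - w)) (dotvDl z d p).
rewrite (dotvDl (p + _) _ d) (dotvDl p _ d) !dotvZl.
rewrite (dotvC (z *m B)) dotv_mulmx (dotvC (z *m B *m B^T)) (dotvC d p).
by field.
Qed.

Lemma curv_ge0 lam d : 0 <= lam -> 0 <= curv lam d.
Proof.
by move=> lam0; rewrite addr_ge0 // mulr_ge0 ?sqnorm_ge0 // divr_ge0 // ltW.
Qed.

Lemma curvZ lam t d : curv lam (t *: d) = t ^+ 2 * curv lam d.
Proof. by rewrite /curv -scalemxAl !sqnormZ; field. Qed.

Lemma f_neq_ninfty z : f z != -oo%E.
Proof. by case: f_pcc => -[]. Qed.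

Lemma argmin_fin p lam w z : is_argmin (obj p lam w) z -> f z \is a fin_num.
Proof.
case: f_pcc => -[_ [z0 /fineK fz0]] _ _ /(_ z0); rewrite /obj -fz0 -EFinD.
by have := f_neq_ninfty z; case: (f z).
Qed.

Lemma subdiff_plus_lb z u : subdiff_plus f sigma B z u ->
  f z \is a fin_num /\ forall z',
    ((fine (f z) + dotv (u - sigma *: (z *m B *m B^T)) (z' - z))%:E <= f z')%E.
Proof.
case=> v [fz sub] ->; split => // z'.
by rewrite addrK EFinD fineK //; exact: sub.
Qed.

Lemma argmin_first_order p lam w zs z' : 0 <= lam ->
  is_argmin (obj p lam w) zs -> f z' \is a fin_num ->
  0 <= fine (f z') - fine (f zs) + dotv (phi_grad p lam w zs) (z' - zs).
Proof.
move=> lam0 zs_min fz'; have fzs := argmin_fin zs_min.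
case: f_pcc => _ _ f_cvx.
apply: (ge0_small_step (curv_ge0 (z' - zs) lam0)) => t t0 t1.
have := f_cvx z' zs t (fine (f z')) (fine (f zs)).
rewrite t1 (ltW t0) !fineK // => /(_ isT (lexx _) (lexx _)).
have -> : t *: z' + (1 - t) *: zs = zs + t *: (z' - zs).
  by rewrite scalerBr scalerBl scale1r addrCA.
have := zs_min (zs + t *: (z' - zs)); rewrite /obj phi_shift curvZ dotvZr.
have := f_neq_ninfty (zs + t *: (z' - zs)).
case: (f _) => [r _| |] //; rewrite -(fineK fzs) -!EFinD !lee_fin /=.
by move: (fine (f z')) (fine (f zs)) => F' Fs; nra.
Qed.

Lemma argmin_subdiff p lam w zs : 0 <= lam ->
  is_argmin (obj p lam w) zs -> subdiff_plus f sigma B zs (- p - lam *: (zs - w)).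
Proof.
move=> lam0 zs_min; apply: T_max.2 => z' _ [v [fz' sub] ->].
have first_order := argmin_first_order lam0 zs_min fz'.
have subgrad := sub zs.
rewrite -(fineK fz') -(fineK (argmin_fin zs_min)) -EFinD lee_fin in subgrad.
set d := z' - zs in first_order; set g := phi_grad p lam w zs in first_order.
have -> : - p - lam *: (zs - w) - (v + sigma *: (z' *m B *m B^T)) =
    - (v + g) - sigma *: (d *m B *m B^T).
  rewrite /g /phi_grad /d !mulmxBl; move: (z' *m B *m B^T) (zs *m B *m B^T) => P' P.
  by apply/rowP => i; rewrite !mxE; ring.
have zd : zs - z' = - d by rewrite opprB.
rewrite zd dotvNr in subgrad.
rewrite zd dotvNr dotvBl dotvNl dotvZl dotvDl (dotvC (d *m B *m B^T)) -dotv_mulmx.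
rewrite opprB opprK.
have : 0 <= sigma * sqnorm (d *m B) by rewrite mulr_ge0 ?sqnorm_ge0 // ltW.
rewrite /sqnorm; lra.
Qed.

Lemma subdiff_argmin p zs :
  subdiff_plus f sigma B zs (- p) -> is_argmin (obj p 0 0) zs.
Proof.
move=> /subdiff_plus_lb [fzs lb] z; have := lb z.
rewrite /obj [in phi _ _ _ z](_ : z = zs + (z - zs)) ?phi_shift; last by rewrite addrC subrK.
have := curv_ge0 (z - zs) (lexx 0); have := f_neq_ninfty z.
case: (f z) => [r _| |] // curv0; last by rewrite addye ?leey.
rewrite -(fineK fzs) -!EFinD !lee_fin /= /phi_grad scale0r addr0 dotvBl dotvNl dotvDl.
by lra.
Qed.

Definition fobj p lam w z : R := fine (f z) + phi p lam w z.

Lemma fobj_lower_bound p lam w : 0 < lam ->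
  exists K, forall z, f z \is a fin_num -> K <= fobj p lam w z.
Proof.
move=> lam0; have [z1 [u1 /subdiff_plus_lb [_ lb]]] := maximal_monotone_nonempty T_max.
set v1 := u1 - _ in lb; set a := p + v1.
exists (fine (f z1) - dotv v1 z1 + dotv w a - sqnorm a / lam / 2) => z fz.
have := lb z; rewrite -(fineK fz) lee_fin => /= lbz.
have := dotv_ge (z - w) a lam0; rewrite dotvBl /a dotvDr.
have : 0 <= sigma / 2 * sqnorm (z *m B) by rewrite mulr_ge0 ?sqnorm_ge0 // divr_ge0 // ltW.
rewrite /fobj /phi dotvBr (dotvC v1 z) in lbz *; lra.
Qed.

Lemma fobj_midpoint p lam w M x y :
  (forall z, f z \is a fin_num -> M <= fobj p lam w z) ->
  f x \is a fin_num -> f y \is a fin_num ->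
  lam / 8 * sqnorm (x - y) <= (fobj p lam w x + fobj p lam w y) / 2 - M.
Proof.
move=> M_lb fx fy; case: f_pcc => _ _ f_cvx.
set mid := 2^-1 *: x + (1 - 2^-1) *: y; set h : 'rV[R]_n := 2^-1 *: (x - y).
have := f_cvx x y 2^-1 (fine (f x)) (fine (f y)).
rewrite invr_ge0 ler0n invf_le1 ?ler1n ?ltr0n // !fineK // => /(_ isT (lexx _) (lexx _)).
rewrite -/mid => fmid_le.
have fmid : f mid \is a fin_num by move: fmid_le (f_neq_ninfty mid); case: (f mid).
rewrite -(fineK fmid) lee_fin in fmid_le; have M_mid := M_lb mid fmid.
have ex : x = mid + h by rewrite /mid /h; apply/rowP => i; rewrite !mxE; field.
have ey : y = mid + - h by rewrite /mid /h; apply/rowP => i; rewrite !mxE; field.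
have phix := phi_shift p lam w mid h; rewrite -ex in phix.
have phiy := phi_shift p lam w mid (- h); rewrite -ey /curv mulNmx !sqnormN dotvNr in phiy.
have sh : sqnorm h = 4^-1 * sqnorm (x - y) by rewrite /h sqnormZ; congr (_ * _); field.
have : 0 <= sigma / 2 * sqnorm (h *m B) by rewrite mulr_ge0 ?sqnorm_ge0 // divr_ge0 // ltW.
move: phix phiy M_mid; rewrite /fobj /curv sh.
move: (dotv _ h) (sigma / 2 * sqnorm (h *m B)) => G Sb; lra.
Qed.

Lemma phi_lower_near p lam w l del : 0 <= lam -> 0 < del ->
  exists2 r, 0 < r & forall y, sqnorm (y - l) < r -> phi p lam w l - del < phi p lam w y.
Proof.
move=> lam0 del0; set g := phi_grad p lam w l.
have g1 : 0 < sqnorm g + 1 by have := sqnorm_ge0 g; lra.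
pose t := del / (sqnorm g + 1); have t0 : 0 < t by rewrite divr_gt0.
have tg : t * sqnorm g <= del.
  by rewrite /t mulrAC ler_pdivrMr //; have := sqnorm_ge0 g; nra.
exists (t * del) => [|y near]; first exact: mulr_gt0.
have := phi_shift p lam w l (y - l); rewrite [l + _]addrC subrK -/g => ->.
have : sqnorm (y - l) / t < del by rewrite ltr_pdivrMr // mulrC.
have := dotv_ge g (y - l) t0; have := curv_ge0 (y - l) lam0; lra.
Qed.

Lemma obj_limit_le p lam w M zs l : 0 <= lam -> sq_limit zs l ->
  (forall N, f (zs N) \is a fin_num /\ fobj p lam w (zs N) < M + N.+1%:R^-1) ->
  (obj p lam w l <= M%:E)%E.
Proof.
move=> lam0 zs_l zs_min; rewrite leNgt; apply/negP => M_lt.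
have [del del0 fl_big] : exists2 del, 0 < del & ((M + 3 * del - phi p lam w l)%:E < f l)%E.
  move: M_lt; rewrite /obj; case: (f l) => [r | | ] //= M_lt.
    exists ((r + phi p lam w l - M) / 4); rewrite -EFinD lte_fin in M_lt.
      by lra.
    by rewrite lte_fin; lra.
  by exists 1 => //; exact: ltry.
case: f_pcc => _ /(_ l _ fl_big) [e1 e10 f_near] _.
have [r r0 phi_near] := phi_lower_near p w l lam0 del0.
have [N1 HN1] : exists N1, forall i, (N1 <= i)%N -> sqnorm (zs i - l) < Num.min e1 r.
  by apply: zs_l; rewrite lt_min e10 r0.
have [N2 HN2] := inv_succ_lt del0.
pose N := maxn N1 N2; have [fzN fobjN] := zs_min N.
have := HN1 N (leq_maxl _ _); rewrite lt_min => /andP[near1 near2].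
have := f_near _ near1; rewrite -(fineK fzN) lte_fin.
have := phi_near _ near2; have := HN2 N (leq_maxr _ _).
move: fobjN del0; rewrite /fobj; move: (N.+1%:R^-1 : R) => eN; lra.
Qed.

Lemma exists_argmin_reg p lam w : 0 < lam -> exists zs, is_argmin (obj p lam w) zs.
Proof.
move=> lam0; have [K K_lb] := fobj_lower_bound p w lam0.
case: f_pcc => -[_ [z0 fz0]] _ _.
pose S : set R := fun v => exists2 z, f z \is a fin_num & v = fobj p lam w z.
have S_lb : has_lbound S by exists K => _ [z fz ->]; exact: K_lb.
have S0 : S (fobj p lam w z0) by exists z0.
pose M := inf S; have M_lb z : f z \is a fin_num -> M <= fobj p lam w z.
  by move=> fz; apply: ge_inf => //; exists z.
have seq_ex N : exists z, f z \is a fin_num /\ fobj p lam w z < M + N.+1%:R^-1.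
  have [_ [z fz ->] ?] := @inf_adherent _ S _ (inv_succ_gt0 R N) (conj (ex_intro _ _ S0) S_lb).
  by exists z.
pose zs N := sval (cid (seq_ex N)).
have zs_min N : f (zs N) \is a fin_num /\ fobj p lam w (zs N) < M + N.+1%:R^-1.
  exact: svalP (cid (seq_ex N)).
have zs_cauchy : sq_cauchy zs.
  move=> e e0; have [N HN] := inv_succ_lt (mulr_gt0 (divr_gt0 lam0 (ltr0n R 8)) e0).
  exists N => i j Ni Nj; have [fi vi] := zs_min i; have [fj vj] := zs_min j.
  have le_N k : (N <= k)%N -> k.+1%:R^-1 <= N.+1%:R^-1 :> R.
    by move=> Nk; rewrite lef_pV2 ?posrE ?ltr0n // ler_nat.
  rewrite -(ltr_pM2l (divr_gt0 lam0 (ltr0n R 8))).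
  have := fobj_midpoint M_lb fi fj; have := le_N i Ni; have := le_N j Nj.
  have := HN N (leqnn _); move: vi vj.
  move: (lam / 8 * sqnorm _) (lam / 8 * e) (i.+1%:R^-1 : R) (j.+1%:R^-1 : R) (N.+1%:R^-1 : R).
  by move=> a b ci cj cN; lra.
have [l zs_l] := sq_cauchy_limit zs_cauchy.
have l_min := obj_limit_le (ltW lam0) zs_l zs_min.
exists l => z; apply: le_trans l_min _.
have [fz|] := boolP (f z \is a fin_num).
  by rewrite /obj -(fineK fz) -EFinD lee_fin; exact: M_lb.
by rewrite fin_numE f_neq_ninfty negbK /obj => /eqP ->; rewrite addye ?leey.
Qed.

Lemma argmin_unique p z1 z2 :
  is_argmin (obj p 0 0) z1 -> is_argmin (obj p 0 0) z2 -> z1 = z2.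
Proof.
case: T_strong => mu mu0 strong /(argmin_subdiff (lexx 0)) T1 /(argmin_subdiff (lexx 0)) T2.
have := strong _ _ _ _ T1 T2; rewrite !scale0r !subr0 subrr dotv0l.
rewrite pmulr_rle0 // => z12; apply/eqP; rewrite -subr_eq0 -sqnorm_eq0.
by rewrite eq_le z12 sqnorm_ge0.
Qed.

Lemma exists_argmin p : exists zs, is_argmin (obj p 0 0) zs.
Proof.
have T_reg lam w u : 0 < lam -> exists z, subdiff_plus f sigma B z (u - lam *: (z - w)).
  move=> lam0; have [z z_min] := exists_argmin_reg (- u) w lam0.
  by exists z; rewrite -[u]opprK; exact: argmin_subdiff (ltW lam0) z_min.
have [zs T_zs] := maximal_strongly_monotone_surj T_max T_strong T_reg (- p).
by exists zs; exact: subdiff_argmin.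
Qed.

Definition block_obj (x e : 'rV[R]_m) z : \bar R :=
  (f z + (dotv x (z *m B + e) + sigma / 2 * sqnorm (z *m B + e))%:E)%E.

Lemma block_objE x e z : block_obj x e z =
  (obj ((x + sigma *: e) *m B^T) 0 0 z + (dotv x e + sigma / 2 * sqnorm e)%:E)%E.
Proof.
rewrite /block_obj /obj -addeA -EFinD; congr (_ + _%:E).
rewrite /phi subr0 mul0r mul0r addr0 -dotv_mulmx dotvDr dotvZr (dotvC (z *m B)).
by rewrite sqnormD dotvDr; field.
Qed.

Lemma is_argmin_block x e z :
  is_argmin (block_obj x e) z <-> is_argmin (obj ((x + sigma *: e) *m B^T) 0 0) z.
Proof.
by split => z_min z'; have := z_min z'; rewrite !block_objE ?leeD2rE.
Qed.

Lemma block_argmin_exists_unique x e : exists! z, is_argmin (block_obj x e) z.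
Proof.
have [zs zs_min] := exists_argmin ((x + sigma *: e) *m B^T).
exists zs; split; first exact/is_argmin_block.
by move=> z' /is_argmin_block; exact: argmin_unique.
Qed.

Lemma block_argmin_eq x e x' e' z z' : x + sigma *: e = x' + sigma *: e' ->
  is_argmin (block_obj x e) z -> is_argmin (block_obj x' e') z' -> z = z'.
Proof.
by move=> xe /is_argmin_block z_min /is_argmin_block; rewrite -xe; exact: argmin_unique.
Qed.

End RegularisedSubproblem.

Lemma zsub_block (R : realType) (nx ny nz : nat) (f2 : 'rV[R]_nz -> \bar R)
  (B1 : 'M[R]_(ny, nx)) (B2 : 'M[R]_(nz, nx)) (c : 'rV[R]_nx) (sigma : R) y x :
  zsub f2 B1 B2 c sigma y x = block_obj f2 sigma B2 x (y *m B1 - c).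
Proof. by apply: funext => z; rewrite /zsub /block_obj [y *m B1 + _]addrC addrA. Qed.

Lemma ysub_block (R : realType) (nx ny nz : nat) (f1 : 'rV[R]_ny -> \bar R)
  (B1 : 'M[R]_(ny, nx)) (B2 : 'M[R]_(nz, nx)) (c : 'rV[R]_nx) (sigma : R) z x :
  ysub f1 B1 B2 c sigma z x = block_obj f1 sigma B1 x (z *m B2 - c).
Proof. by apply: funext => y; rewrite /ysub /block_obj addrA. Qed.

Section AlgorithmsAgree.
Variables (R : realType) (nx ny nz : nat) (f1 : 'rV[R]_ny -> \bar R)
  (f2 : 'rV[R]_nz -> \bar R) (B1 : 'M[R]_(ny, nx)) (B2 : 'M[R]_(nz, nx))
  (c : 'rV[R]_nx) (sigma : R).
Hypotheses
  (zsub_argmin_eq : forall y x y' x' z z',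
     x + sigma *: (y *m B1) = x' + sigma *: (y' *m B1) ->
     is_argmin (zsub f2 B1 B2 c sigma y x) z ->
     is_argmin (zsub f2 B1 B2 c sigma y' x') z' -> z = z')
  (ysub_argmin_eq : forall z x y y',
     is_argmin (ysub f1 B1 B2 c sigma z x) y ->
     is_argmin (ysub f1 B1 B2 c sigma z x) y' -> y = y').
Variables (y : nat -> 'rV[R]_ny) (z : nat -> 'rV[R]_nz) (x xh xt : nat -> 'rV[R]_nx)
  (yw : nat -> 'rV[R]_ny) (zw : nat -> 'rV[R]_nz) (xw : nat -> 'rV[R]_nx)
  (yb : nat -> 'rV[R]_ny) (zb : nat -> 'rV[R]_nz) (xb : nat -> 'rV[R]_nx).
Hypotheses (y_init : y 0%N = yw 0%N) (x_init : xt 0%N = xw 0%N).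
Hypothesis algI : forall k : nat,
  [/\ is_argmin (zsub f2 B1 B2 c sigma (y k) (xt k)) (z k.+1),
      xh k = xt k + sigma *: (y k *m B1 + z k.+1 *m B2 - c),
      is_argmin (ysub f1 B1 B2 c sigma (z k.+1) (xh k)) (y k.+1),
      x k.+1 = xh k + sigma *: (y k.+1 *m B1 + z k.+1 *m B2 - c) &
      xt k.+1 = (k.+2%:R)^-1 *: xt 0%N + (k.+1%:R / k.+2%:R) *: x k.+1
                + (sigma / k.+2%:R) *: (y 0%N *m B1 - y k.+1 *m B1)].
Hypothesis algII : forall k : nat,
  [/\ is_argmin (zsub f2 B1 B2 c sigma (yw k) (xw k)) (zb k.+1),
      xb k.+1 = xw k + sigma *: (yw k *m B1 + zb k.+1 *m B2 - c),
      is_argmin (ysub f1 B1 B2 c sigma (zb k.+1) (xb k.+1)) (yb k.+1),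
      yw k.+1 = (k.+2%:R)^-1 *: yw 0%N
                + (k.+1%:R / k.+2%:R) *: (2%:R *: yb k.+1 - yw k) &
      (zw k.+1 = (k.+2%:R)^-1 *: zw 0%N
                + (k.+1%:R / k.+2%:R) *: (2%:R *: zb k.+1 - zw k) /\
       xw k.+1 = (k.+2%:R)^-1 *: xw 0%N
                + (k.+1%:R / k.+2%:R) *: (2%:R *: xb k.+1 - xw k))].

Lemma iterates_agree_step k :
  xt k + sigma *: (y k *m B1) = xw k + sigma *: (yw k *m B1) ->
  [/\ y k.+1 = yb k.+1, z k.+1 = zb k.+1 & xh k = xb k.+1].
Proof.
move=> shift; have [z_min xhE y_min _ _] := algI k; have [zb_min xbE yb_min _ _] := algII k.
have ez : z k.+1 = zb k.+1 := zsub_argmin_eq shift z_min zb_min.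
have exh : xh k = xb k.+1.
  by rewrite xhE xbE ez !scalerDr !addrA shift.
by split => //; apply: ysub_argmin_eq y_min _; rewrite ez exh.
Qed.

Lemma shifted_multipliers_agree k :
  xt k + sigma *: (y k *m B1) = xw k + sigma *: (yw k *m B1).
Proof.
elim: k => [|k IH]; first by rewrite x_init y_init.
have [ey ez exh] := iterates_agree_step IH.
have [_ _ _ xE xtE] := algI k; have [_ xbE _ ywE [_ xwE]] := algII k.
rewrite xtE xE exh ywE xwE xbE ey ez x_init y_init.
rewrite mulmxDl -!scalemxAl mulmxBl -scalemxAl.
have k2 : k.+2%:R = k.+1%:R + 1 :> R by rewrite -natr1.
have k0 : k.+1%:R + 1 != 0 :> R by rewrite -k2 pnatr_eq0.
rewrite k2; move: k0 (xw 0%N) (yw 0%N *m B1) (yb k.+1 *m B1) (yw k *m B1).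
move: (zb k.+1 *m B2) (xw k) (k.+1%:R : R) => Z X r k0 X0 Y0 Yb Y.
by apply/rowP => i; rewrite !mxE; field.
Qed.

Lemma iterates_agree k : [/\ y k.+1 = yb k.+1, z k.+1 = zb k.+1 & xh k = xb k.+1].
Proof. exact/iterates_agree_step/shifted_multipliers_agree. Qed.

End AlgorithmsAgree.

Unset Implicit Arguments.

Theorem propositionA1 (R : realType) (nx ny nz : nat)
  (f1 : 'rV[R]_ny -> \bar R) (f2 : 'rV[R]_nz -> \bar R)
  (B1 : 'M[R]_(ny, nx)) (B2 : 'M[R]_(nz, nx)) (c : 'rV[R]_nx) (sigma : R)
  (y0 : 'rV[R]_ny) (z0 : 'rV[R]_nz) (x0 : 'rV[R]_nx) :
  0 < sigma ->
  proper_closed_convex f1 -> proper_closed_convex f2 ->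
  maximal_monotone (subdiff_plus f1 sigma B1) ->
  strongly_monotone (subdiff_plus f1 sigma B1) ->
  maximal_monotone (subdiff_plus f2 sigma B2) ->
  strongly_monotone (subdiff_plus f2 sigma B2) ->
  in_dom f1 y0 -> in_dom f2 z0 ->
  (forall (y : 'rV[R]_ny) (x : 'rV[R]_nx),
      exists! z, is_argmin (zsub f2 B1 B2 c sigma y x) z) /\
  (forall (z : 'rV[R]_nz) (x : 'rV[R]_nx),
      exists! y, is_argmin (ysub f1 B1 B2 c sigma z x) y) /\
  (forall (y : nat -> 'rV[R]_ny) (z : nat -> 'rV[R]_nz)
          (x xh xt : nat -> 'rV[R]_nx)
          (yw : nat -> 'rV[R]_ny) (zw : nat -> 'rV[R]_nz) (xw : nat -> 'rV[R]_nx)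
          (yb : nat -> 'rV[R]_ny) (zb : nat -> 'rV[R]_nz) (xb : nat -> 'rV[R]_nx),
    (* Algorithm I; xh k stands for x^{k+1/2}, xt k for tilde x^k *)
    y 0%N = y0 -> z 0%N = z0 -> x 0%N = x0 -> xt 0%N = x0 ->
    (forall k : nat,
      [/\ is_argmin (zsub f2 B1 B2 c sigma (y k) (xt k)) (z k.+1),
          xh k = xt k + sigma *: (y k *m B1 + z k.+1 *m B2 - c),
          is_argmin (ysub f1 B1 B2 c sigma (z k.+1) (xh k)) (y k.+1),
          x k.+1 = xh k + sigma *: (y k.+1 *m B1 + z k.+1 *m B2 - c) &
          xt k.+1 = (k.+2%:R)^-1 *: xt 0%N + (k.+1%:R / k.+2%:R) *: x k.+1
                    + (sigma / k.+2%:R) *: (y 0%N *m B1 - y k.+1 *m B1)]) ->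
    (* Algorithm II; (yw k, zw k, xw k) = w^k, (yb k.+1, zb k.+1, xb k.+1) = bar w^{k+1} *)
    yw 0%N = y0 -> zw 0%N = z0 -> xw 0%N = x0 ->
    (forall k : nat,
      [/\ is_argmin (zsub f2 B1 B2 c sigma (yw k) (xw k)) (zb k.+1),
          xb k.+1 = xw k + sigma *: (yw k *m B1 + zb k.+1 *m B2 - c),
          is_argmin (ysub f1 B1 B2 c sigma (zb k.+1) (xb k.+1)) (yb k.+1),
          yw k.+1 = (k.+2%:R)^-1 *: yw 0%N
                    + (k.+1%:R / k.+2%:R) *: (2%:R *: yb k.+1 - yw k) &
          (zw k.+1 = (k.+2%:R)^-1 *: zw 0%N
                    + (k.+1%:R / k.+2%:R) *: (2%:R *: zb k.+1 - zw k) /\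
          xw k.+1 = (k.+2%:R)^-1 *: xw 0%N
                    + (k.+1%:R / k.+2%:R) *: (2%:R *: xb k.+1 - xw k))]) ->
    forall k : nat, [/\ y k.+1 = yb k.+1, z k.+1 = zb k.+1 & xh k = xb k.+1]).
Proof.
move=> sigma0 f1_pcc f2_pcc T1_max T1_strong T2_max T2_strong _ _.
have z_unique := block_argmin_exists_unique sigma0 f2_pcc T2_max T2_strong.
have y_unique := block_argmin_exists_unique sigma0 f1_pcc T1_max T1_strong.
split; [|split].
- by move=> y x; rewrite zsub_block.
- by move=> z x; rewrite ysub_block.
move=> y z x xh xt yw zw xw yb zb xb y_0 _ _ xt_0 algI yw_0 _ xw_0 algII.
apply: (iterates_agree _ _ _ _ algI algII); last by rewrite xt_0 xw_0.
- move=> y' x' y'' x'' z' z'' shift; rewrite !zsub_block.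
  apply: (block_argmin_eq sigma0 f2_pcc T2_max T2_strong).
  by rewrite !scalerBr !addrA shift.
- move=> z' x' y' y''; rewrite !ysub_block.
  exact: (block_argmin_eq sigma0 f1_pcc T1_max T1_strong (erefl _)).
- by rewrite y_0 yw_0.
Qed.
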